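(* $h(3)\leq 5$; that is, every $\mathbb{Z}_3$-colorable graph is $\Gamma'$-colorable for every Abelian group $\Gamma'$ of order at least $5$.
   Context: Graphs are finite, may have multiple edges but no loops. For an Abelian group $\Gamma$, $G$ is $\Gamma$-colorable if for some (equivalently, any) orientation $D$ of $G$ and every $\varphi:E(G)\to\Gamma$ there is $c:V(G)\to\Gamma$ with $c(w)-c(u)\neq\varphi(uw)$ for every directed edge $uw$ of $D$. $h(k)$ is the least number such that whenever a graph is $\Gamma$-colorable for some Abelian group $\Gamma$ of order $k$, it is $\Gamma'$-colorable for every Abelian group $\Gamma'$ of order $|\Gamma'|\geq h(k)$. *)

From mathcomp Require Import all_boot all_algebra.
Set Implicit Arguments. Unset Strict Implicit. Unset Printing Implicit Defensive.
Import GRing.Theory.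
Local Open Scope ring_scope.

Record graph := Graph {
  gV : finType;
  gE : finType;
  src : gE -> gV;
  tgt : gE -> gV;
  noloop : forall e, src e != tgt e
}.

Definition colorable (Gamma : zmodType) (G : graph) : Prop :=
  forall phi : gE G -> Gamma, exists c : gV G -> Gamma,
    forall e : gE G, c (tgt e) - c (src e) != phi e.

(* A Z_3-colourable graph H satisfies 3^|E(H)| <= 3^|V(H)| * 2^|E(H)|: each of the
   3^|E| edge labellings phi is avoided by some colouring, while each of the 3^|V|
   colourings is avoided by exactly 2^|E| labellings.  Applied to induced subgraphs,
   every nonempty vertex set S spans fewer than 3|S| edges, so some vertex of S has
   fewer than 6 incident edges inside S: G is 5-degenerate, and greedy colouring
   works for every group of order at least 6.
   A group of order 5 has an element g of order 5, and x |-> x g on {0, 1, 2}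
   determines differences: x g - y g = x' g - y' g forces x + y' = x' + y in N, as
   both sides are at most 4.  So a labelling phi with values in Gamma' pulls back
   to a Z_3-labelling, and a Z_3-colouring avoiding it pushes forward to a
   Gamma'-colouring avoiding phi. *)

From mathcomp Require Import all_boot all_algebra all_fingroup all_solvable zify.
Set Implicit Arguments. Unset Strict Implicit. Unset Printing Implicit Defensive.
Import GRing.Theory.

Section InducedSubgraph.
Variables (G : graph) (S : {set gV G}).

Definition inner_edges : {set gE G} := [set e | (src e \in S) && (tgt e \in S)].

Lemma inner_src e : e \in inner_edges -> src e \in S.
Proof. by rewrite inE => /andP[]. Qed.

Lemma inner_tgt e : e \in inner_edges -> tgt e \in S.
Proof. by rewrite inE => /andP[]. Qed.

Definition induced : graph :=
  @Graph {v | v \in S} {e | e \in inner_edges}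
    (fun e => exist _ (src (val e)) (inner_src (valP e)))
    (fun e => exist _ (tgt (val e)) (inner_tgt (valP e)))
    (fun e => noloop (val e)).

Lemma card_induced_vertices : #|gV induced| = #|S|.
Proof. exact: card_sig. Qed.

Lemma card_induced_edges : #|gE induced| = #|inner_edges|.
Proof. exact: card_sig. Qed.

Lemma colorable_induced (Gamma : zmodType) : colorable Gamma G -> colorable Gamma induced.
Proof.
move=> colG phi.
have [c avoid] := colG (fun e => if insub e is Some e' then phi e' else 0%R).
exists (fun v => c (val v)) => e /=.
by have := avoid (val e); rewrite valK.
Qed.
End InducedSubgraph.

Section Counting.
Variables (Gamma : finZmodType) (G : graph).

Definition avoids (phi : {ffun gE G -> Gamma}) (c : {ffun gV G -> Gamma}) : bool :=
  [forall e, (c (tgt e) - c (src e) != phi e)%R].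

Lemma card_avoiding (c : {ffun gV G -> Gamma}) :
  #|[pred phi | avoids phi c]| = #|Gamma|.-1 ^ #|gE G|.
Proof.
have -> : #|[pred phi | avoids phi c]| =
          #|family (fun e => predC1 (c (tgt e) - c (src e))%R)|.
  apply: eq_card => phi; apply/forallP/familyP => /= avoid e;
    by move: (avoid e); rewrite inE eq_sym.
rewrite card_family foldrE big_map big_enum /=.
by rewrite (eq_bigr (fun=> #|Gamma|.-1)) ?prod_nat_const // => e _; rewrite cardC1.
Qed.

Lemma colorable_card_bound :
  colorable Gamma G -> #|Gamma| ^ #|gE G| <= #|Gamma| ^ #|gV G| * #|Gamma|.-1 ^ #|gE G|.
Proof.
move=> colG.
have covered (phi : {ffun gE G -> Gamma}) : 0 < \sum_c avoids phi c.
  have [c avoid] := colG phi.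
  rewrite (bigD1 [ffun v => c v]) //=; suff -> : avoids phi [ffun v => c v] by [].
  by apply/forallP => e; rewrite !ffunE.
rewrite -card_ffun -sum1_card -[X in _ <= X * _]card_ffun -sum_nat_const.
rewrite (@leq_trans (\sum_phi \sum_c avoids phi c)) ?leq_sum // exchange_big.
apply: leq_sum => c _; rewrite -(card_avoiding c) -sum1_card [X in _ <= X]big_mkcond.
by apply: leq_sum => phi _; rewrite inE; case: avoids.
Qed.
End Counting.

Section Degree.
Variables (G : graph) (S : {set gV G}).

Definition inner_incident (v : gV G) : {set gE G} :=
  [set e in inner_edges S | (src e == v) || (tgt e == v)].

Definition inner_degree (v : gV G) : nat := #|inner_incident v|.

Lemma sum_inner_degree_le : \sum_(v in S) inner_degree v <= 2 * #|inner_edges S|.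
Proof.
have deg_le v : inner_degree v <= \sum_(e in inner_edges S) ((src e == v) + (tgt e == v)).
  rewrite /inner_degree /inner_incident -sum1_card big_mkcond [X in _ <= X]big_mkcond /=.
  apply: leq_sum => e _; rewrite !inE.
  by case: ((src e \in S) && (tgt e \in S)); case: (src e == v); case: (tgt e == v).
have count_once u : u \in S -> \sum_(v in S) (u == v) = 1.
  move=> u_in; rewrite (bigD1 u) //= eqxx big1 // => v /andP[_ /negbTE vu].
  by rewrite eq_sym vu.
apply: (@leq_trans (\sum_(v in S) \sum_(e in inner_edges S) ((src e == v) + (tgt e == v)))).
  by apply: leq_sum => v _; apply: deg_le.
rewrite exchange_big mulnC -sum_nat_const /= eq_leq //.
apply: eq_bigr => e e_in; rewrite big_split /=.
by rewrite !count_once ?(inner_src e_in) ?(inner_tgt e_in).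
Qed.
End Degree.

Definition degenerate (G : graph) (d : nat) : Prop :=
  forall S : {set gV G}, S != set0 -> exists2 v, v \in S & inner_degree S v <= d.

Section Greedy.
Variables (G : graph) (Gamma : finZmodType) (phi : gE G -> Gamma).

Definition avoids_within (S : {set gV G}) (c : gV G -> Gamma) : Prop :=
  forall e, e \in inner_edges S -> (c (tgt e) - c (src e) != phi e)%R.

Lemma avoids_within_extend (S : {set gV G}) v (c : gV G -> Gamma) :
  inner_degree S v < #|Gamma| -> avoids_within (S :\ v) c ->
  exists x, avoids_within S (fun u => if u == v then x else c u).
Proof.
move=> small_deg avoid.
pose forced e := if src e == v then (c (tgt e) - phi e)%R else (c (src e) + phi e)%R.
have /card_gt0P[x] : 0 < #|~: [set forced e | e in inner_incident S v]|.
  by rewrite cardsCs setCK subn_gt0 (leq_ltn_trans (leq_imset_card _ _) small_deg).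
rewrite inE => x_free.
exists x => e e_in /=.
have forced_e : e \in inner_incident S v -> x != forced e.
  by move=> inc; apply: contraNneq x_free => ->; apply: imset_f.
case: (eqVneq (src e) v) => [src_v | src_nv].
  have tgt_nv : tgt e != v by rewrite -src_v eq_sym noloop.
  rewrite (negbTE tgt_nv).
  apply: contraNneq (forced_e _) => [diff_e|].
    by rewrite /forced src_v eqxx -diff_e subKr.
  by rewrite /inner_incident inE e_in src_v eqxx.
case: (eqVneq (tgt e) v) => [tgt_v | tgt_nv].
  apply: contraNneq (forced_e _) => [diff_e|].
    by rewrite /forced (negbTE src_nv) -diff_e addrC subrK.
  by rewrite /inner_incident inE e_in tgt_v eqxx orbT.
apply: avoid.
by rewrite !inE src_nv tgt_nv (inner_src e_in) (inner_tgt e_in).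
Qed.
End Greedy.

Lemma colorable_degenerate (G : graph) (Gamma : finZmodType) d :
  degenerate G d -> d < #|Gamma| -> colorable Gamma G.
Proof.
move=> degG lt_d phi.
suff coloring S : exists c, avoids_within phi S c.
  by have [c avoid] := coloring setT; exists c => e; apply: avoid; rewrite !inE.
elim: {S}_.+1 {-2}S (ltnSn #|S|) => // n IH S.
case: (eqVneq S set0) => [-> _ | S_nt card_S].
  by exists (fun=> 0%R) => e /inner_src; rewrite inE.
have [v v_in deg_v] := degG S S_nt.
have [|c avoid] := IH (S :\ v); first by rewrite (cardsD1 v) v_in in card_S.
have [x avoid_x] := avoids_within_extend (leq_ltn_trans deg_v lt_d) avoid.
by exists (fun u => if u == v then x else c u).
Qed.

Lemma exp3_mul_exp2_lt n m : 0 < n -> 3 * n <= m -> 3 ^ n * 2 ^ m < 3 ^ m.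
Proof.
move=> n_gt0 /subnKC <-; set k := m - 3 * n.
rewrite (expnD 2) (expnD 3) !expnM mulnA -expnMn.
by rewrite ltn_mull ?expn_gt0 ?ltn_exp2r //; case: k => // k; rewrite leq_exp2r.
Qed.

Section Sparsity.
Variable G : graph.
Hypothesis colG : colorable 'Z_3 G.

Lemma inner_edges_lt (S : {set gV G}) : S != set0 -> #|inner_edges S| < 3 * #|S|.
Proof.
move=> S_nt; have := colorable_card_bound (colorable_induced (S := S) colG).
rewrite card_induced_vertices card_induced_edges card_ord /=.
rewrite ltnNge; apply: contraL => le_3S; rewrite -ltnNge.
by apply: exp3_mul_exp2_lt; rewrite ?card_gt0.
Qed.

Lemma colorable_Z3_degenerate : degenerate G 5.
Proof.
move=> S S_nt; apply/exists_inP; apply: contraT; rewrite negb_exists_in => /forall_inP high.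
have : 2 * (3 * #|S|) <= 2 * #|inner_edges S|.
  apply: leq_trans (sum_inner_degree_le S); rewrite mulnA mulnC -sum_nat_const.
  by apply: leq_sum => v /high; rewrite ltnNge.
by rewrite leq_pmul2l // leqNgt inner_edges_lt.
Qed.
End Sparsity.

Section DifferenceReflecting.
Variables (Gamma : finZmodType) (Gamma' : zmodType) (f : Gamma -> Gamma').

Definition diff_reflecting : Prop :=
  forall x y x' y', (f y - f x = f y' - f x' -> y - x = y' - x')%R.

Lemma colorable_diff_reflecting (G : graph) :
  diff_reflecting -> colorable Gamma G -> colorable Gamma' G.
Proof.
move=> reflect_f colG phi'.
pose phi e := if [pick p : Gamma * Gamma | (f p.2 - f p.1 == phi' e)%R] is Some p
              then (p.2 - p.1)%R else 0%R.
have [c avoid] := colG phi.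
exists (fun v => f (c v)) => e; apply/negP => /eqP hit.
have := avoid e; rewrite /phi; case: pickP => [p /eqP hit_p | miss].
  by rewrite -hit in hit_p; rewrite (reflect_f _ _ _ _ hit_p) eqxx.
by have := miss (c (src e), c (tgt e)); rewrite /= hit eqxx.
Qed.
End DifferenceReflecting.

Lemma Zp_mulrn_diff_reflecting p (Gamma : finZmodType) (g : Gamma) :
  (p.+2).*2.-1 <= #[g]%g -> diff_reflecting (fun x : 'Z_p.+2 => (g *+ x)%R).
Proof.
move=> large_order x y x' y' /eqP.
have small (a b : 'Z_p.+2) : a + b < #[g]%g.
  apply: leq_trans large_order.
  by have := ltn_ord a; have := ltn_ord b; rewrite /Zp_trunc /=; lia.
rewrite subr_eq addrAC eq_sym subr_eq -!mulrnDr -!FinRing.zmodXgE eq_expg_mod_order.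
rewrite !modn_small ?small // => /eqP /(congr1 (fun n => n%:R : 'Z_p.+2)%R).
rewrite !natrD !natr_Zp => sum_eq.
by apply/eqP; rewrite subr_eq addrAC sum_eq addrK.
Qed.

Theorem mainTheorem13 (G : graph) :
  colorable 'Z_3 G ->
  forall Gamma' : finZmodType, 5 <= #|Gamma'| -> colorable Gamma' G.
Proof.
move=> colG Gamma'; rewrite leq_eqVlt => /orP[/eqP card5 | card_gt5].
  have [g _ order5] : {g : Gamma' | g \in [set: Gamma'] & #[g]%g = 5}.
    by apply: Cauchy => //; rewrite cardsT -card5.
  apply: colorable_diff_reflecting colG.
  by apply: (@Zp_mulrn_diff_reflecting 1 _ g); rewrite order5.
exact: colorable_degenerate (colorable_Z3_degenerate colG) card_gt5.
Qed.
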